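(* (a) Let $(A,\succ_A,\prec_A,\omega)$ be a quadratic anti-pre-Leibniz algebra. Then $\omega$ is a nondegenerate skew-symmetric $2$-cocycle on the sub-adjacent Leibniz algebra $(A,\circ_A)$, $\circ_A=\succ_A+\prec_A$. (b) Conversely, let $\omega$ be a nondegenerate skew-symmetric $2$-cocycle on a Leibniz algebra $(A,\circ_A)$, and let $\succ_A,\prec_A$ be defined by $\omega(x\succ_A y,z)=\omega(y,x\circ_A z)$ and $\omega(x\prec_A y,z)=-\omega(x,y\circ_A z+z\circ_A y)$. Then $(A,\succ_A,\prec_A)$ is an anti-pre-Leibniz algebra and $\omega$ is invariant on it, i.e. $(A,\succ_A,\prec_A,\omega)$ is a quadratic anti-pre-Leibniz algebra.
   Context: All vector spaces are finite-dimensional over a field $\mathbb K$ of characteristic zero. A Leibniz algebra is a vector space $A$ with multiplication $\circ_A$ satisfying $x\circ_A(y\circ_A z)=(x\circ_A y)\circ_A z+y\circ_A(x\circ_A z)$. A bilinear form $\omega$ on $(A,\circ_A)$ is a $2$-cocycle if $\omega(z,x\circ_A y)=\omega(x,y\circ_A z+z\circ_A y)-\omega(y,x\circ_A z)$ for all $x,y,z$. An anti-pre-Leibniz algebra is a vector space $A$ with multiplications $\succ_A,\prec_A$ such that, with $x\circ_A y=x\succ_A y+x\prec_A y$, for all $x,y,z$: (AL1) $(x\circ_A y)\prec_A z=x\succ_A(y\circ_A z)-y\succ_A(x\circ_A z)$; (AL2) $(x\circ_A y)\succ_A z=y\succ_A(x\succ_A z)-x\succ_A(y\succ_A z)$; (AL3)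 $x\prec_A(y\circ_A z)=(y\succ_A x)\prec_A z-y\succ_A(x\prec_A z)$; (AL4) $(x\succ_A y)\prec_A z=-(y\prec_A x)\prec_A z$. A bilinear form $\omega$ on an anti-pre-Leibniz algebra is invariant if $\omega(x\succ_A y,z)=\omega(y,x\circ_A z)$ and $\omega(x\prec_A y,z)=-\omega(x,y\circ_A z+z\circ_A y)$ for all $x,y,z$. A quadratic anti-pre-Leibniz algebra is an anti-pre-Leibniz algebra with a nondegenerate skew-symmetric invariant bilinear form. *)

(* Finite-dimensional vector spaces over a field K of
   characteristic zero are modelled as  V : vectType K  with [pchar K] =i pred0. *)
From HB Require Import structures.
From mathcomp Require Import all_boot all_order all_algebra.
Set Implicit Arguments. Unset Strict Implicit. Unset Printing Implicit Defensive.
Import GRing.Theory.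
Local Open Scope ring_scope.

Section Defs.
Variables (K : fieldType) (V : vectType K).

Definition bilinear_mul (m : V -> V -> V) : Prop :=
  (forall (a : K) (x y z : V), m (a *: x + y) z = a *: m x z + m y z) /\
  (forall (a : K) (x y z : V), m z (a *: x + y) = a *: m z x + m z y).

Definition bilinear_form (w : V -> V -> K) : Prop :=
  (forall (a : K) (x y z : V), w (a *: x + y) z = a * w x z + w y z) /\
  (forall (a : K) (x y z : V), w z (a *: x + y) = a * w z x + w z y).

Definition skew_sym_form (w : V -> V -> K) : Prop :=
  forall x y : V, w x y = - w y x.

Definition nondeg_form (w : V -> V -> K) : Prop :=
  forall x : V, (forall y : V, w x y = 0) -> x = 0.

Definition Leibniz (circ : V -> V -> V) : Prop :=
  bilinear_mul circ /\
  forall x y z : V, circ x (circ y z) = circ (circ x y) z + circ y (circ x z).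

Definition cocycle2 (circ : V -> V -> V) (w : V -> V -> K) : Prop :=
  forall x y z : V, w z (circ x y) = w x (circ y z + circ z y) - w y (circ x z).

Definition sub_adjacent (succ prec : V -> V -> V) : V -> V -> V :=
  fun x y => succ x y + prec x y.

Definition anti_pre_Leibniz (succ prec : V -> V -> V) : Prop :=
  let circ := sub_adjacent succ prec in
  bilinear_mul succ /\ bilinear_mul prec /\
  [/\ (forall x y z, prec (circ x y) z = succ x (circ y z) - succ y (circ x z)),
      (forall x y z, succ (circ x y) z = succ y (succ x z) - succ x (succ y z)),
      (forall x y z, prec x (circ y z) = prec (succ y x) z - succ y (prec x z)) &
      (forall x y z, prec (succ x y) z = - prec (prec y x) z)].

Definition invariant_form (succ prec : V -> V -> V) (w : V -> V -> K) : Prop :=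
  let circ := sub_adjacent succ prec in
  (forall x y z, w (succ x y) z = w y (circ x z)) /\
  (forall x y z, w (prec x y) z = - w x (circ y z + circ z y)).

Definition quadratic_APL (succ prec : V -> V -> V) (w : V -> V -> K) : Prop :=
  [/\ anti_pre_Leibniz succ prec, bilinear_form w, nondeg_form w,
      skew_sym_form w & invariant_form succ prec w].

Definition defined_by_form (circ : V -> V -> V) (w : V -> V -> K)
  (succ prec : V -> V -> V) : Prop :=
  (forall x y z, w (succ x y) z = w y (circ x z)) /\
  (forall x y z, w (prec x y) z = - w x (circ y z + circ z y)).

End Defs.

From mathcomp Require Import all_boot all_algebra ring.
Set Implicit Arguments. Unset Strict Implicit. Unset Printing Implicit Defensive.
Import GRing.Theory.
Local Open Scope ring_scope.

(* In (a) the Leibniz identity of succ + prec follows from (AL1), (AL3) and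
   (AL4) alone, and the cocycle identity is the invariance of w read through
   skew-symmetry.  In (b) nondegeneracy makes w an isomorphism of V onto its
   dual (the Gram matrix is invertible), which defines succ and prec; pairing
   with w turns succ + prec into circ by the cocycle identity and turns (AL2),
   (AL3), (AL4) into identities of Leibniz algebras.  (AL1) becomes
   w(xy, zt + tz) = w(xz, yt) - w(yz, xt), and only twice this identity is a
   consequence of the cocycle identity, hence char K <> 2. *)

Section Scalar.
Variables (K : fieldType) (V : vectType K) (f : V -> K).
Hypothesis f_scalar : scalar f.

Lemma scalarfD x y : f (x + y) = f x + f y.
Proof. exact: (GRing.semilinear_linear f_scalar).2. Qed.

Lemma scalarfZ a x : f (a *: x) = a * f x.
Proof. exact: (GRing.semilinear_linear f_scalar).1. Qed.

Lemma scalarfN x : f (- x) = - f x.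
Proof. by rewrite -scaleN1r scalarfZ mulN1r. Qed.

Lemma scalarf0 : f 0 = 0.
Proof. by rewrite -(scale0r (0 : V)) scalarfZ mul0r. Qed.

Lemma scalarf_comb n (c : 'I_n -> K) (b : 'I_n -> V) :
  f (\sum_(i < n) c i *: b i) = \sum_(i < n) c i * f (b i).
Proof.
rewrite (big_morph f scalarfD scalarf0); apply: eq_bigr => i _; exact: scalarfZ.
Qed.

End Scalar.

Section BilinearMul.
Variables (K : fieldType) (V : vectType K) (m : V -> V -> V).
Hypothesis m_bilinear : bilinear_mul m.

Let linearl z : linear (m ^~ z). Proof. by move=> a x y; apply: m_bilinear.1. Qed.
Let linearr z : linear (m z). Proof. by move=> a x y; apply: m_bilinear.2. Qed.

Lemma bmulDl x y z : m (x + y) z = m x z + m y z.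
Proof. exact: (GRing.semilinear_linear (linearl z)).2. Qed.
Lemma bmulDr x y z : m z (x + y) = m z x + m z y.
Proof. exact: (GRing.semilinear_linear (linearr z)).2. Qed.
Lemma bmulZl a x z : m (a *: x) z = a *: m x z.
Proof. exact: (GRing.semilinear_linear (linearl z)).1. Qed.
Lemma bmulZr a x z : m z (a *: x) = a *: m z x.
Proof. exact: (GRing.semilinear_linear (linearr z)).1. Qed.
Lemma bmulNl x z : m (- x) z = - m x z.
Proof. by rewrite -scaleN1r bmulZl scaleN1r. Qed.
Lemma bmulNr x z : m z (- x) = - m z x.
Proof. by rewrite -scaleN1r bmulZr scaleN1r. Qed.

End BilinearMul.

Lemma bilinear_mulD (K : fieldType) (V : vectType K) (m m' : V -> V -> V) :
  bilinear_mul m -> bilinear_mul m' -> bilinear_mul (fun x y => m x y + m' x y).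
Proof.
by move=> [ml mr] [m'l m'r]; split=> a x y z; rewrite (ml, mr) (m'l, m'r) scalerDr addrACA.
Qed.

Section BilinearForm.
Variables (K : fieldType) (V : vectType K) (w : V -> V -> K).
Hypothesis w_bilinear : bilinear_form w.

Lemma bform_scalarl z : scalar (w ^~ z).
Proof. by move=> a x y; apply: w_bilinear.1. Qed.
Lemma bform_scalarr z : scalar (w z).
Proof. by move=> a x y; apply: w_bilinear.2. Qed.

Lemma bformDl x y z : w (x + y) z = w x z + w y z.
Proof. exact: scalarfD (bform_scalarl z) x y. Qed.
Lemma bformDr x y z : w z (x + y) = w z x + w z y.
Proof. exact: scalarfD (bform_scalarr z) x y. Qed.
Lemma bformZl a x z : w (a *: x) z = a * w x z.
Proof. exact: scalarfZ (bform_scalarl z) a x. Qed.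
Lemma bformZr a x z : w z (a *: x) = a * w z x.
Proof. exact: scalarfZ (bform_scalarr z) a x. Qed.
Lemma bformNl x z : w (- x) z = - w x z.
Proof. exact: scalarfN (bform_scalarl z) x. Qed.
Lemma bformNr x z : w z (- x) = - w z x.
Proof. exact: scalarfN (bform_scalarr z) x. Qed.

Hypothesis w_nondeg : nondeg_form w.

Lemma nondeg_form_inj x y : (forall t, w x t = w y t) -> x = y.
Proof.
move=> wxy; apply/eqP; rewrite -subr_eq0; apply/eqP/w_nondeg => t.
by rewrite bformDl bformNl wxy subrr.
Qed.

End BilinearForm.

Section Representation.
Variables (K : fieldType) (V : vectType K) (w : V -> V -> K).

Local Notation n := (\dim {:V}).
Local Notation e := (vbasis {:V}).

Definition gram_mx : 'M[K]_n := \matrix_(i, j) w e`_i e`_j.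

Definition form_rep (f : V -> K) : V :=
  let c := \row_j f e`_j *m invmx gram_mx in \sum_i c 0 i *: e`_i.

Lemma scalar_vbasis_eq (f g : V -> K) :
  scalar f -> scalar g -> (forall i : 'I_n, f e`_i = g e`_i) -> f =1 g.
Proof.
move=> f_scalar g_scalar fg z; rewrite (coord_vbasis (memvf z)).
by rewrite !scalarf_comb //; apply: eq_bigr => i _; rewrite fg.
Qed.

Hypothesis w_bilinear : bilinear_form w.

Lemma gram_mxE (r : 'rV_n) j : (r *m gram_mx) 0 j = w (\sum_i r 0 i *: e`_i) e`_j.
Proof.
rewrite mxE (scalarf_comb (bform_scalarl w_bilinear _)).
by apply: eq_bigr => i _; rewrite mxE.
Qed.

Hypothesis w_nondeg : nondeg_form w.

Lemma gram_mx_unit : gram_mx \in unitmx.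
Proof.
rewrite unitmxE unitfE; apply/negP => /det0P [r r_neq0 rM0].
have /freeP e_free := basis_free (vbasisP {:V}).
suff /e_free r0 : \sum_i r 0 i *: e`_i = 0.
  by case/eqP: r_neq0; apply/rowP => i; rewrite mxE r0.
apply: w_nondeg; apply: scalar_vbasis_eq (bform_scalarr w_bilinear _) _ _ => [a x y|j].
  by rewrite mulr0 addr0.
by rewrite -gram_mxE rM0 mxE.
Qed.

Lemma form_repE f : scalar f -> forall z, w (form_rep f) z = f z.
Proof.
move=> f_scalar; apply: scalar_vbasis_eq (bform_scalarr w_bilinear _) f_scalar _ => j.
by rewrite /form_rep -gram_mxE mulmxKV ?gram_mx_unit // mxE.
Qed.

End Representation.

Lemma vect_eq_coord (K : fieldType) (V : vectType K) (u v : V) :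
  (forall i, coord (vbasis {:V}) i u = coord (vbasis {:V}) i v) -> u = v.
Proof.
move=> uv; rewrite (coord_vbasis (memvf u)) (coord_vbasis (memvf v)).
by apply: eq_bigr => i _; rewrite uv.
Qed.

Lemma anti_pre_Leibniz_sub_adjacent (K : fieldType) (V : vectType K)
    (succ prec : V -> V -> V) :
  anti_pre_Leibniz succ prec -> Leibniz (sub_adjacent succ prec).
Proof.
move=> [succ_bilinear [prec_bilinear [AL1 AL2 AL3 AL4]]].
set c := sub_adjacent succ prec.
split=> [|x y z]; first exact: bilinear_mulD.
have prec_antisym : prec x (c y z) - prec y (c x z) = succ (c x y) z.
  have := AL1 x y z; rewrite !AL3 AL2 AL4 /c /sub_adjacent.
  rewrite (bmulDl prec_bilinear) !(bmulDr succ_bilinear) => /(canRL (addrK _)) ->.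
  (* a linear identity in V, checked on coordinates so that [ring] applies *)
  by apply: vect_eq_coord => i; rewrite !linearD !linearN /=; ring.
apply/eqP; rewrite -subr_eq; apply/eqP.
by rewrite {1 3}/c /sub_adjacent opprD addrACA -AL1 prec_antisym addrC.
Qed.

Lemma invariant_form_cocycle (K : fieldType) (V : vectType K)
    (succ prec : V -> V -> V) (w : V -> V -> K) :
  bilinear_form w -> skew_sym_form w -> invariant_form succ prec w ->
  cocycle2 (sub_adjacent succ prec) w.
Proof.
move=> w_bilinear w_skew [inv_succ inv_prec] x y z.
by rewrite w_skew {1}/sub_adjacent bformDl // inv_succ inv_prec; ring.
Qed.

Lemma Leibniz_circl (K : fieldType) (V : vectType K) (circ : V -> V -> V) :
  Leibniz circ -> forall x y z, circ (circ x y) z = circ x (circ y z) - circ y (circ x z).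
Proof. by move=> [_ circ_Leibniz] x y z; rewrite circ_Leibniz addrK. Qed.

Section SymplecticLeibniz.
Variables (K : fieldType) (V : vectType K) (circ : V -> V -> V) (w : V -> V -> K).
Hypotheses (circ_Leibniz : Leibniz circ) (w_bilinear : bilinear_form w).
Hypotheses (w_nondeg : nondeg_form w) (w_skew : skew_sym_form w).
Hypotheses (w_cocycle : cocycle2 circ w) (two_neq0 : (2 : K) != 0).

Let circ_bilinear : bilinear_mul circ := circ_Leibniz.1.

Local Ltac expand :=
  rewrite ?(Leibniz_circl circ_Leibniz, bmulDl circ_bilinear, bmulDr circ_bilinear,
    bmulNl circ_bilinear, bmulNr circ_bilinear, bformDl w_bilinear,
    bformDr w_bilinear, bformNl w_bilinear, bformNr w_bilinear).

Lemma cocycle_circ_circ x y z t :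
  w (circ x y) (circ z t + circ t z) = w (circ x z) (circ y t) - w (circ y z) (circ x t).
Proof.
pose sym u v := w u v + w v u.
have sym0 u v : sym u v = 0 by rewrite /sym w_skew addNr.
pose defect a b e := w e (circ a b) - w a (circ b e + circ e b) + w b (circ a e).
have defect0 a b e : defect a b e = 0 by rewrite /defect w_cocycle; ring.
set lhs := w _ _; set rhs := (X in _ = X).
suff /eqP : 2 * (lhs - rhs) = 0.
  by rewrite mulf_eq0 (negbTE two_neq0) subr_eq0 => /eqP.
(* eight instances of the cocycle identity, each with a product as third argument *)
have -> : 2 * (lhs - rhs) =
    sym (circ x t) (circ y z) - sym (circ y t) (circ x z)
  + sym (circ t z) (circ x y) + sym (circ z t) (circ x y)
  + defect t z (circ x y) + defect x t (circ y z)
  - defect x y (circ t z) - defect x y (circ z t) + defect x z (circ y t)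
  - defect y t (circ x z) - defect y z (circ x t) + defect z t (circ x y).
  by rewrite /lhs /rhs /sym /defect; expand; ring.
by rewrite !sym0 !defect0; ring.
Qed.

Lemma defined_by_form_exists :
  exists succ prec : V -> V -> V, defined_by_form circ w succ prec.
Proof.
exists (fun x y => form_rep w (fun z => w y (circ x z))).
exists (fun x y => form_rep w (fun z => - w x (circ y z + circ z y))).
split=> x y; apply: form_repE => // a u v.
  by rewrite circ_bilinear.2 w_bilinear.2.
by rewrite circ_bilinear.1 circ_bilinear.2 !bformDr // !bformZr //; ring.
Qed.

Variables succ prec : V -> V -> V.
Hypothesis succ_prec_def : defined_by_form circ w succ prec.

Let succ_def := succ_prec_def.1.
Let prec_def := succ_prec_def.2.
Let w_inj := nondeg_form_inj w_bilinear w_nondeg.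

Lemma defined_by_form_sub_adjacent x y : sub_adjacent succ prec x y = circ x y.
Proof.
apply: w_inj => t; rewrite /sub_adjacent bformDl // succ_def prec_def.
by rewrite (w_skew (circ x y)) w_cocycle !bformDr //; ring.
Qed.

Lemma defined_succ_bilinear : bilinear_mul succ.
Proof.
split=> a x y z; apply: w_inj => t; rewrite bformDl // bformZl // !succ_def.
  by rewrite circ_bilinear.1 bformDr // bformZr.
by rewrite bformDl // bformZl.
Qed.

Lemma defined_prec_bilinear : bilinear_mul prec.
Proof.
split=> a x y z; apply: w_inj => t; rewrite bformDl // bformZl // !prec_def.
  by rewrite bformDl // bformZl //; ring.
rewrite circ_bilinear.1 circ_bilinear.2 !bformDr // !bformZr //; ring.
Qed.

Lemma defined_by_form_anti_pre_Leibniz : anti_pre_Leibniz succ prec.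
Proof.
split; first exact: defined_succ_bilinear.
split; first exact: defined_prec_bilinear.
split=> x y z; rewrite ?defined_by_form_sub_adjacent; apply: w_inj => t;
  expand; rewrite ?(succ_def, prec_def).
- by rewrite cocycle_circ_circ; ring.
all: by expand; ring.
Qed.

Lemma defined_by_form_quadratic : quadratic_APL succ prec w.
Proof.
split=> //; first exact: defined_by_form_anti_pre_Leibniz.
by split=> x y z; rewrite !defined_by_form_sub_adjacent.
Qed.

End SymplecticLeibniz.

Theorem proposition2p22 (K : fieldType) (charK : [pchar K] =i pred0)
    (V : vectType K) :
  (forall (succ prec : V -> V -> V) (w : V -> V -> K),
     quadratic_APL succ prec w ->
     [/\ Leibniz (sub_adjacent succ prec), bilinear_form w, nondeg_form w,
         skew_sym_form w & cocycle2 (sub_adjacent succ prec) w]) /\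
  (forall (circ : V -> V -> V) (w : V -> V -> K),
     Leibniz circ -> bilinear_form w -> nondeg_form w -> skew_sym_form w ->
     cocycle2 circ w ->
     (exists succ prec : V -> V -> V, defined_by_form circ w succ prec) /\
     (forall succ prec : V -> V -> V, defined_by_form circ w succ prec ->
        quadratic_APL succ prec w)).
Proof.
split=> [succ prec w [APL w_bilinear w_nondeg w_skew w_inv] | circ w].
  split=> //; first exact: anti_pre_Leibniz_sub_adjacent.
  exact: invariant_form_cocycle.
move=> circ_Leibniz w_bilinear w_nondeg w_skew w_cocycle.
have two_neq0 : (2 : K) != 0 by rewrite (pcharf0P K).1.
split; first exact: defined_by_form_exists.
exact: defined_by_form_quadratic circ_Leibniz w_bilinear w_nondeg w_skew w_cocycle two_neq0.
Qed.
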